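(* Let $k$ be a positive integer. If $m$ and $n$ are positive integers with $m\equiv n\pmod k$, then $R_k^m\cong R_k^n$.
   Context: $\mathbb{N}=\{1,2,3,\dots\}$. $R$ denotes the ring of all $\mathbb{N}\times\mathbb{N}$ integer matrices with only finitely many nonzero entries in each row and each column, with entrywise addition and multiplication $(AB)_{i,j}=\sum_{l\ge1}a_{i,l}b_{l,j}$. Fix a positive integer $k$. Partition $\mathbb{N}$ into consecutive blocks $J_1=\{1\}$ and, for $m\ge2$, $J_m=\{2+k(m-2),\dots,1+k(m-1)\}$. For $A\in R$, the block $A^{m,n}$ is the submatrix with rows indexed by $J_m$ and columns by $J_n$. $R_k$ is the subring of $A\in R$ such that for all but finitely many pairs $(m,n)$ with $m,n\ge2$, $A^{m,n}=cI_k$ for some integer $c$. For a ring $S$, $S^n$ is the free left $S$-module of $n$-tuples with componentwise operations; $S^m\cong S^n$ means there is a bijective left-$S$-linear map $S^m\to S^n$, equivalently there exist $X\in M_{m\times n}(S)$, $Y\in M_{n\times m}(S)$ with $XY=I_m$, $YX=I_n$. *)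

From mathcomp Require Import all_boot all_order all_algebra.
Set Implicit Arguments. Unset Strict Implicit. Unset Printing Implicit Defensive.
Import GRing.Theory Num.Theory.
Local Open Scope ring_scope.

(* An N x N integer matrix.  CONVENTION: indices are 0-based, i.e. the Rocq
   index i stands for the paper's index i+1 in N = {1,2,3,...}. *)
Definition imat := nat -> nat -> int.

Definition row_finite (A : imat) : Prop :=
  forall i, exists N : nat, forall j, (N <= j)%N -> A i j = 0.
Definition col_finite (A : imat) : Prop :=
  forall j, exists N : nat, forall i, (N <= i)%N -> A i j = 0.

Definition inR (A : imat) : Prop := row_finite A /\ col_finite A.

(* The paper's block J_{b+2} (b >= 0) is {2+kb, ..., 1+k(b+1)}, i.e. in 0-based
   indexing {1+kb+r | r < k}.  (J_1 = {1} is the 0-based index 0.)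
   blk_scalar k A b c : the block A^{b+2,c+2} equals c0 * I_k for some integer c0. *)
Definition blk_scalar (k : nat) (A : imat) (b c : nat) : Prop :=
  exists c0 : int, forall r s : nat, (r < k)%N -> (s < k)%N ->
    A (1 + k * b + r)%N (1 + k * c + s)%N = (if r == s then c0 else 0).

Definition inRk (k : nat) (A : imat) : Prop :=
  inR A /\
  exists N : nat, forall b c : nat, (N <= b)%N \/ (N <= c)%N -> blk_scalar k A b c.

(* ev_sum f v : the series sum_{l >= 0} f l is eventually constant, equal to v
   (for rows/columns with finite support this is the entry of the product). *)
Definition ev_sum (f : nat -> int) (v : int) : Prop :=
  exists N : nat, forall M : nat, (N <= M)%N -> \sum_(l < M) f l = v.

Definition Rmx (p q : nat) := 'I_p -> 'I_q -> imat.

Definition R0 : imat := fun _ _ => 0.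
Definition R1 : imat := fun i j => (i == j)%:R.

Definition Rmx1 (p : nat) : Rmx p p := fun a c => if a == c then R1 else R0.

Definition mx_mul_is (p q r : nat) (X : Rmx p q) (Y : Rmx q r) (Z : Rmx p r) : Prop :=
  forall (a : 'I_p) (c : 'I_r) (i j : nat),
    ev_sum (fun l => \sum_(b < q) X a b i l * Y b c l j) (Z a c i j).

(* R_k^m ≅ R_k^n as left R_k-modules: X in M_{m x n}(R_k), Y in M_{n x m}(R_k),
   XY = I_m, YX = I_n. *)
Definition Rk_free_iso (k m n : nat) : Prop :=
  exists (X : Rmx m n) (Y : Rmx n m),
    (forall a b, inRk k (X a b)) /\ (forall b a, inRk k (Y b a)) /\
    mx_mul_is X Y (@Rmx1 m) /\ mx_mul_is Y X (@Rmx1 n).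

From mathcomp Require Import all_boot all_order all_algebra.
From mathcomp Require Import zify.
Set Implicit Arguments. Unset Strict Implicit. Unset Printing Implicit Defensive.
Import GRing.Theory.

(* Index the coordinates of R^m by pairs (a, i) with a < m and i in N.  A
   bijection sigma from [m] x N onto [n] x N, with inverse tau, yields the
   0/1 matrices X = graph(sigma) and Y = graph(tau) with XY = I and YX = I;
   their entries lie in R_k as soon as sigma and tau carry each k-block
   {(a, 1 + kp + r) | r < k} either offset-preservingly onto a k-block or off
   all k-blocks.  For n = m + jk such a bijection exists: enumerate the blocks
   of [m] x N by t = pm + a and those of [n] x N by t = qn + b; the first j
   blocks of [m] x N fill the jk extra points (b, 0) with m <= b < n, and
   block t >= j is sent to block t - j. *)

Definition blk (k p r : nat) : nat := 1 + k * p + r.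
Arguments blk : simpl never.

Lemma blk_eq0 k p r : (blk k p r == 0) = false.
Proof. by rewrite /blk -addnA. Qed.

Lemma divnMDl_small d q r : r < d -> (q * d + r) %/ d = q.
Proof. by move=> lt_r; rewrite divnMDl ?divn_small ?addn0 //; apply: leq_ltn_trans lt_r. Qed.

Lemma modnMDl_small d q r : r < d -> (q * d + r) %% d = r.
Proof. by move=> lt_r; rewrite modnMDl modn_small. Qed.

Lemma blk_pred_divn k p r : r < k -> (blk k p r).-1 %/ k = p.
Proof. by move=> lt_r; rewrite /blk -addnA add1n /= mulnC divnMDl_small. Qed.

Lemma blk_pred_modn k p r : r < k -> (blk k p r).-1 %% k = r.
Proof. by move=> lt_r; rewrite /blk -addnA add1n /= mulnC modnMDl_small. Qed.

Lemma blk_pred k i : 0 < i -> i = blk k (i.-1 %/ k) (i.-1 %% k).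
Proof. by move=> i_gt0; rewrite /blk mulnC -addnA -divn_eq add1n prednK. Qed.

Lemma eq_blk k p q r s : r < k -> s < k ->
  (blk k p r == blk k q s) = (p == q) && (r == s).
Proof.
move=> lt_r lt_s; apply/eqP/andP => [e|[/eqP -> /eqP ->]//].
have := congr1 (fun i => (i.-1 %/ k, i.-1 %% k)) e.
by rewrite /= !blk_pred_divn ?blk_pred_modn // => -[-> ->].
Qed.

Local Open Scope ring_scope.

Definition block_scalar_map (k : nat) (f : nat * nat -> nat * nat) : Prop :=
  forall a b p q, exists c : bool, forall r s, (r < k)%N -> (s < k)%N ->
    (f (a, blk k p r) == (b, blk k q s)) = (r == s) && c.

Definition graph_mx (m n : nat) (f : nat * nat -> nat * nat) : Rmx m n :=
  fun a b i l => (f (a : nat, i) == (b : nat, l))%:R.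

Lemma inR_of_support (A : imat) (f g : nat -> nat) :
  (forall i l, A i l != 0 -> l = f i /\ i = g l) -> inR A.
Proof.
move=> supp; split=> [i|l]; [exists (f i).+1 => l lt_fl | exists (g l).+1 => i lt_gi].
- by apply/eqP/negP => /negP/supp[el _]; rewrite el ltnn in lt_fl.
- by apply/eqP/negP => /negP/supp[_ ei]; rewrite ei ltnn in lt_gi.
Qed.

Lemma sum_pair_indicator (n M : nat) (u : nat * nat) (F : nat -> nat -> int) :
  (u.1 < n)%N -> (u.2 < M)%N ->
  \sum_(l < M) \sum_(b < n) (u == (b : nat, l : nat))%:R * F b l = F u.1 u.2.
Proof.
case: u => [b0 l0] /= lt_b0 lt_l0.
rewrite (bigD1 (Ordinal lt_l0)) //= (bigD1 (Ordinal lt_b0)) //= eqxx mul1r.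
rewrite big1 => [|b ne_b]; last first.
  rewrite xpair_eqE eqxx andbT eq_sym.
  by case: eqP => [e|]; [case/eqP: ne_b; apply: val_inj | rewrite mul0r].
rewrite big1 => [|l ne_l]; first by rewrite !addr0.
apply: big1 => b _.
rewrite xpair_eqE.
by case: (l0 =P l) => [e|_]; [case/eqP: ne_l; apply: val_inj | rewrite andbF mul0r].
Qed.

Section GraphMatrix.
Variables (k m n : nat) (sigma tau : nat * nat -> nat * nat).
Hypotheses (sigma_bound : forall u, (u.1 < m)%N -> ((sigma u).1 < n)%N)
           (sigmaK : forall u, (u.1 < m)%N -> tau (sigma u) = u).

Lemma graph_mx_inR (a : 'I_m) (b : 'I_n) : inR (@graph_mx m n sigma a b).
Proof.
apply: (@inR_of_support _ (fun i => (sigma (a : nat, i)).2)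
                          (fun l => (tau (b : nat, l)).2)) => i l.
rewrite /graph_mx; case: (sigma _ =P _) => [e _|_]; last by rewrite mulr0n eqxx.
by rewrite e /= -e sigmaK /=.
Qed.

Lemma graph_mx_mulK : mx_mul_is (@graph_mx m n sigma) (@graph_mx n m tau) (@Rmx1 m).
Proof.
move=> a c i j; exists (sigma (a : nat, i)).2.+1 => M lt_M.
rewrite /graph_mx (sum_pair_indicator (fun b l => (tau (b, l) == (c : nat, j))%:R)) //;
  last exact: (@sigma_bound (a : nat, i) (ltn_ord a)).
rewrite -surjective_pairing sigmaK; last exact: ltn_ord.
by rewrite /Rmx1 xpair_eqE -[(a : nat) == c]/(a == c); case: (a == c).
Qed.

Hypothesis sigma_blk : block_scalar_map k sigma.

Lemma graph_mx_inRk (a : 'I_m) (b : 'I_n) : inRk k (@graph_mx m n sigma a b).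
Proof.
split; first exact: graph_mx_inR.
exists 0%N => p q _; have [c hc] := sigma_blk a b p q.
by exists c%:R => r s lt_r lt_s; rewrite /graph_mx hc //; case: (r == s).
Qed.

End GraphMatrix.

Lemma graph_mx_free_iso (k m n : nat) (sigma tau : nat * nat -> nat * nat) :
  (forall u, (u.1 < m)%N -> ((sigma u).1 < n)%N) ->
  (forall v, (v.1 < n)%N -> ((tau v).1 < m)%N) ->
  (forall u, (u.1 < m)%N -> tau (sigma u) = u) ->
  (forall v, (v.1 < n)%N -> sigma (tau v) = v) ->
  block_scalar_map k sigma -> block_scalar_map k tau -> Rk_free_iso k m n.
Proof.
move=> sigma_bound tau_bound sigmaK tauK sigma_blk tau_blk.
exists (@graph_mx m n sigma), (@graph_mx n m tau).
split; [|split; [|split]].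
- exact: graph_mx_inRk sigmaK sigma_blk.
- exact: graph_mx_inRk tauK tau_blk.
- exact: graph_mx_mulK sigma_bound sigmaK.
- exact: graph_mx_mulK tau_bound tauK.
Qed.

Section BlockShift.
Local Open Scope nat_scope.
Variables (k m n j : nat).
Hypotheses (k_gt0 : 0 < k) (m_gt0 : 0 < m) (def_n : n = m + j * k).

Definition block_shift (u : nat * nat) : nat * nat :=
  if u.2 == 0 then u else
  let t := u.2.-1 %/ k * m + u.1 in let r := u.2.-1 %% k in
  if t < j then (m + t * k + r, 0) else ((t - j) %% n, blk k ((t - j) %/ n) r).

Definition block_unshift (v : nat * nat) : nat * nat :=
  if v.2 == 0 then
    if v.1 < m then v
    else let t := (v.1 - m) %/ k in (t %% m, blk k (t %/ m) ((v.1 - m) %% k))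
  else let t := v.2.-1 %/ k * n + v.1 + j in (t %% m, blk k (t %/ m) (v.2.-1 %% k)).

Lemma block_shift_blk a p r : r < k -> block_shift (a, blk k p r) =
  let t := p * m + a in
  if t < j then (m + t * k + r, 0) else ((t - j) %% n, blk k ((t - j) %/ n) r).
Proof. by move=> lt_r; rewrite /block_shift blk_eq0 blk_pred_divn ?blk_pred_modn. Qed.

Lemma block_unshift_blk b q r : r < k -> block_unshift (b, blk k q r) =
  let t := q * n + b + j in (t %% m, blk k (t %/ m) r).
Proof. by move=> lt_r; rewrite /block_unshift blk_eq0 blk_pred_divn ?blk_pred_modn. Qed.

Lemma block_unshift_extra t r : r < k ->
  block_unshift (m + t * k + r, 0) = (t %% m, blk k (t %/ m) r).
Proof.
move=> lt_r; rewrite /block_unshift /= -addnA ltnNge leq_addr /=.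
by rewrite addKn divnMDl_small ?modnMDl_small.
Qed.

Lemma block_shiftK u : u.1 < m -> block_unshift (block_shift u) = u.
Proof.
case: u => a [|i] /= lt_a; first by rewrite /block_shift /block_unshift /= lt_a.
rewrite (blk_pred k (ltn0Sn i)) /= block_shift_blk ?ltn_pmod //=.
set p := i %/ k; set r := i %% k; set t := p * m + a.
have [_|le_jt] := ltnP t j.
  by rewrite block_unshift_extra ?ltn_pmod // divnMDl_small ?modnMDl_small.
by rewrite block_unshift_blk ?ltn_pmod //= -divn_eq subnK // divnMDl_small ?modnMDl_small.
Qed.

Lemma block_unshiftK v : v.1 < n -> block_shift (block_unshift v) = v.
Proof.
case: v => b [|l] /= lt_b.
  rewrite /block_unshift /=; case: ifP => [lt_bm|/negbT]; first by rewrite /block_shift.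
  rewrite -leqNgt => le_mb; set t := (b - m) %/ k.
  have lt_tj : t < j by rewrite ltn_divLR //; move: lt_b; rewrite def_n; lia.
  rewrite block_shift_blk ?ltn_pmod //= -divn_eq lt_tj.
  by rewrite -addnA -divn_eq subnKC.
rewrite (blk_pred k (ltn0Sn l)) /= block_unshift_blk ?ltn_pmod //=.
rewrite block_shift_blk ?ltn_pmod //= -divn_eq ltnNge leq_addl /= addnK.
by rewrite divnMDl_small ?modnMDl_small.
Qed.

Lemma block_shift_bound u : u.1 < m -> (block_shift u).1 < n.
Proof.
have lt_mn : m <= n by rewrite def_n leq_addr.
case: u => a [|i] /= lt_a; first by rewrite /block_shift /=; apply: leq_trans lt_mn.
rewrite (blk_pred k (ltn0Sn i)) /= block_shift_blk ?ltn_pmod //=.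
case: ifP => [lt_tj|_]; last by rewrite ltn_pmod //; apply: leq_trans lt_mn.
rewrite def_n -addnA ltn_add2l; apply: leq_trans (_ : (i %/ k * m + a).+1 * k <= _).
  by rewrite mulSn [k + _]addnC ltn_add2l ltn_pmod.
by rewrite leq_mul2r lt_tj orbT.
Qed.

Lemma block_unshift_bound v : (block_unshift v).1 < m.
Proof.
rewrite /block_unshift; case: ifP => _; last exact: ltn_pmod.
by case: ifP => //= _; apply: ltn_pmod.
Qed.

Lemma block_shift_scalar : block_scalar_map k block_shift.
Proof.
move=> a b p q; case: (ltnP (p * m + a) j) => [lt_tj|le_jt].
  exists false => r s lt_r lt_s.
  by rewrite block_shift_blk //= lt_tj xpair_eqE [0 == _]eq_sym blk_eq0 !andbF.
exists (((p * m + a - j) %% n == b) && ((p * m + a - j) %/ n == q)) => r s lt_r lt_s.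
rewrite block_shift_blk //= ltnNge le_jt /= xpair_eqE eq_blk //.
by case: (_ == b); case: (_ == q); case: (r == s).
Qed.

Lemma block_unshift_scalar : block_scalar_map k block_unshift.
Proof.
move=> b a q p; set t := q * n + b + j.
exists ((t %% m == a) && (t %/ m == p)) => r s lt_r lt_s.
rewrite block_unshift_blk //= xpair_eqE eq_blk //.
by case: (_ == a); case: (_ == p); case: (r == s).
Qed.

End BlockShift.

Lemma Rk_free_iso_sym k m n : Rk_free_iso k m n -> Rk_free_iso k n m.
Proof. by case=> X [Y [X_Rk [Y_Rk [XY YX]]]]; exists Y, X. Qed.

Lemma Rk_free_iso_addM k m j :
  (0 < k)%N -> (0 < m)%N -> Rk_free_iso k m (m + j * k).
Proof.
move=> k_gt0 m_gt0.
apply: (@graph_mx_free_iso k m (m + j * k) (block_shift k m (m + j * k) j)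
          (block_unshift k m (m + j * k) j)).
- exact: block_shift_bound.
- by move=> v _; apply: block_unshift_bound.
- exact: block_shiftK.
- exact: block_unshiftK.
- exact: block_shift_scalar.
- exact: block_unshift_scalar.
Qed.

Theorem lemma1 (k m n : nat) :
  (0 < k)%N -> (0 < m)%N -> (0 < n)%N -> m = n %[mod k] -> Rk_free_iso k m n.
Proof.
move=> k_gt0 m_gt0 n_gt0 eq_mn.
wlog le_mn : m n m_gt0 n_gt0 eq_mn / (m <= n)%N.
  move=> iso_le; have [le_mn|/ltnW le_nm] := leqP m n; first exact: iso_le.
  exact/Rk_free_iso_sym/iso_le.
have dvd_k : (k %| n - m)%N by rewrite -eqn_mod_dvd // eq_mn.
by rewrite -(subnKC le_mn) -(divnK dvd_k); apply: Rk_free_iso_addM.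
Qed.
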